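(* Let $\mathcal{A}\subseteq\mathbb{R}^3$ and let $\varphi_1,\ldots,\varphi_N\in L^2(\mathcal{A})$ be pairwise non-parallel with $\boldsymbol{\Psi}=\int_{\mathcal{A}}\boldsymbol{\varphi}^{\mathsf{H}}\boldsymbol{\varphi}\,\mathrm{d}\mathbf{r}$ positive definite, $\boldsymbol{\varphi}(\mathbf{r})=[\varphi_1(\mathbf{r}),\ldots,\varphi_N(\mathbf{r})]$, and eigendecomposition $\boldsymbol{\Psi}=\mathbf{U}\,\mathrm{diag}(\lambda_1,\ldots,\lambda_N)\mathbf{U}^{\mathsf{H}}$, $\lambda_n>0$. For Hermitian $\mathbf{M}$ let $T_{\mathbf{M}}$ be the operator on $L^2(\mathcal{A})$ with kernel $\delta(\mathbf{r}-\mathbf{r}')-\boldsymbol{\varphi}(\mathbf{r})\mathbf{M}\boldsymbol{\varphi}^{\mathsf{H}}(\mathbf{r}')$. Let $\overline{B}_\varphi=T_{\overline{\mathbf{B}}_{\boldsymbol\Psi}}$ with $\overline{\mathbf{B}}_{\boldsymbol\Psi}=\mathbf{U}\,\mathrm{diag}\big(\tfrac{1+\sqrt{1+\lambda_n}}{\lambda_n\sqrt{1+\lambda_n}}\big)\mathbf{U}^{\mathsf{H}}$ and $B_\varphi=T_{\mathbf{B}_{\boldsymbol\Psi}}$ with $\mathbf{B}_{\boldsymbol\Psi}=\mathbf{U}\,\mathrm{diag}\big(\tfrac{1+\sqrt{1+\lambda_n}}{\lambda_n}\big)\mathbf{U}^{\mathsf{H}}$. Then $\overline{B}_\varphi B_\varphi=B_\varphi\overline{B}_\varphi=\mathrm{Id}$,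 i.e. $\int_{\mathcal{A}}\overline{B}_\varphi(\mathbf{r}_1,\mathbf{r})B_\varphi(\mathbf{r},\mathbf{r}_2)\,\mathrm{d}\mathbf{r}=\int_{\mathcal{A}}B_\varphi(\mathbf{r}_2,\mathbf{r})\overline{B}_\varphi(\mathbf{r},\mathbf{r}_1)\,\mathrm{d}\mathbf{r}=\delta(\mathbf{r}_1-\mathbf{r}_2)$.
   Context: Kernels containing $\delta(\mathbf{r}-\mathbf{r}')$ denote the identity plus a finite-rank integral operator. *)

From HB Require Import structures.
From mathcomp Require Import all_boot all_order all_algebra.
From mathcomp Require Import all_classical all_reals all_analysis.
From mathcomp Require Import complex.
Set Implicit Arguments. Unset Strict Implicit. Unset Printing Implicit Defensive.
Import Order.TTheory GRing.Theory Num.Theory.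
Local Open Scope ring_scope.
Local Open Scope classical_set_scope.

Definition R3 (R : realType) := ((R * R) * R)%type.

Definition leb3 (R : realType) : set (R3 R) -> \bar R :=
  ((@lebesgue_measure R \x @lebesgue_measure R) \x @lebesgue_measure R)%E.

Definition cint (R : realType) (A : set (R3 R)) (f : R3 R -> R[i]) : R[i] :=
  Complex (Rintegral (@leb3 R) A (fun x => complex.Re (f x)))
          (Rintegral (@leb3 R) A (fun x => complex.Im (f x))).

Definition L2 (R : realType) (A : set (R3 R)) (f : R3 R -> R[i]) : Prop :=
  measurable_fun A (fun x => complex.Re (f x)) /\
  measurable_fun A (fun x => complex.Im (f x)) /\
  (\int[@leb3 R]_(x in A) ((complex.Re (f x)) ^+ 2 + (complex.Im (f x)) ^+ 2)%:E
     < +oo)%E.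

Definition parallel (R : realType) (A : set (R3 R)) (f g : R3 R -> R[i]) : Prop :=
  exists c : R[i],
    {ae @leb3 R, forall x, A x -> f x = c * g x} \/
    {ae @leb3 R, forall x, A x -> g x = c * f x}.

Definition adjmx (R : rcfType) m n (M : 'M[R[i]]_(m, n)) : 'M[R[i]]_(n, m) :=
  (map_mx (@conjc R) M)^T.

Definition hermitian (R : rcfType) n (M : 'M[R[i]]_n) : Prop := adjmx M = M.

Definition posdef (R : rcfType) n (M : 'M[R[i]]_n) : Prop :=
  hermitian M /\ forall v : 'cV[R[i]]_n, v != 0 -> 0 < (adjmx v *m M *m v) 0 0.

(* Gram matrix Psi = \int_A phi^H phi : Psi_ij = \int_A conj(phi_i) phi_j *)
Definition Gram (R : realType) N (A : set (R3 R)) (phi : 'I_N -> R3 R -> R[i])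
  : 'M[R[i]]_N :=
  \matrix_(i, j) cint A (fun r => conjc (phi i r) * phi j r).

(* The operator T_M on L^2(A) with kernel delta(r - r') - phi(r) M phi^H(r'):
   (T_M f)(r) = f(r) - sum_{i,j} phi_i(r) M_ij \int_A conj(phi_j(r')) f(r') dr' *)
Definition Top (R : realType) N (A : set (R3 R)) (phi : 'I_N -> R3 R -> R[i])
  (M : 'M[R[i]]_N) (f : R3 R -> R[i]) : R3 R -> R[i] :=
  fun r => f r - \sum_(i < N) \sum_(j < N)
              phi i r * M i j * cint A (fun r' => conjc (phi j r') * f r').

Definition diagC (R : rcfType) N (d : 'I_N -> R) : 'M[R[i]]_N :=
  diag_mx (\row_n ((d n)%:C)%C).

Definition Bbar_mx (R : rcfType) N (U : 'M[R[i]]_N) (lam : 'I_N -> R) :=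
  U *m diagC (fun n => (1 + Num.sqrt (1 + lam n)) / (lam n * Num.sqrt (1 + lam n)))
    *m adjmx U.

Definition B_mx (R : rcfType) N (U : 'M[R[i]]_N) (lam : 'I_N -> R) :=
  U *m diagC (fun n => (1 + Num.sqrt (1 + lam n)) / lam n) *m adjmx U.

From HB Require Import structures.
From mathcomp Require Import all_boot all_order all_algebra.
From mathcomp Require Import all_classical all_reals all_analysis.
From mathcomp Require Import complex ring lra measurable_realfun.
Import Order.TTheory GRing.Theory Num.Theory.
Local Open Scope ring_scope.
Local Open Scope classical_set_scope.

(* Write c(f) for the column of inner products <phi_j, f>.  Then
   T_M f = f - phi M c(f) and c(T_M f) = c(f) - Psi M c(f), so that
   T_M1 T_M2 = T_(M1 + M2 - M1 Psi M2): the product is the identity as soon as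
   M1 + M2 = M1 Psi M2.  For Bbar_Psi and B_Psi all three matrices are diagonal
   in the basis U, which reduces this to the scalar identity a + b = a lam b for
   a = (1 + s) / (lam s) and b = (1 + s) / lam, i.e. 1/a + 1/b = lam; it holds
   for every s <> 0, in particular s = sqrt (1 + lam). *)

Section complex_parts.
Context {R : rcfType}.
Implicit Types x y : R[i].

Lemma complex_ReD x y : complex.Re (x + y) = complex.Re x + complex.Re y.
Proof. by case: x; case: y. Qed.

Lemma complex_ImD x y : complex.Im (x + y) = complex.Im x + complex.Im y.
Proof. by case: x; case: y. Qed.

Lemma complex_ReB x y : complex.Re (x - y) = complex.Re x - complex.Re y.
Proof. by case: x; case: y. Qed.

Lemma complex_ImB x y : complex.Im (x - y) = complex.Im x - complex.Im y.
Proof. by case: x; case: y. Qed.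

Lemma complex_ReM x y :
  complex.Re (x * y) = complex.Re x * complex.Re y - complex.Im x * complex.Im y.
Proof. by case: x; case: y. Qed.

Lemma complex_ImM x y :
  complex.Im (x * y) = complex.Re x * complex.Im y + complex.Im x * complex.Re y.
Proof. by case: x => a b; case: y => c d /=; rewrite addrC. Qed.

Lemma complex_Re_conjM x y :
  complex.Re (conjc x * y) = complex.Re x * complex.Re y + complex.Im x * complex.Im y.
Proof. by case: x => a b; case: y => c d /=; rewrite mulNr opprK. Qed.

Lemma complex_Im_conjM x y :
  complex.Im (conjc x * y) = complex.Re x * complex.Im y - complex.Im x * complex.Re y.
Proof. by case: x => a b; case: y => c d /=; rewrite mulNr addrC. Qed.

Definition normc2 x : R := complex.Re x ^+ 2 + complex.Im x ^+ 2.

Lemma normc2_ge0 x : 0 <= normc2 x.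
Proof. by rewrite addr_ge0 ?sqr_ge0. Qed.

Lemma normr_Re_conjM_le x y : `|complex.Re (conjc x * y)| <= normc2 x + normc2 y.
Proof.
rewrite complex_Re_conjM /normc2; case: x => a b; case: y => c d /=.
have := sqr_ge0 (a + c); have := sqr_ge0 (b + d).
have := sqr_ge0 (a - c); have := sqr_ge0 (b - d).
by move=> *; rewrite ler_norml; apply/andP; split; nra.
Qed.

Lemma normr_Im_conjM_le x y : `|complex.Im (conjc x * y)| <= normc2 x + normc2 y.
Proof.
rewrite complex_Im_conjM /normc2; case: x => a b; case: y => c d /=.
have := sqr_ge0 (a + d); have := sqr_ge0 (b + c).
have := sqr_ge0 (a - d); have := sqr_ge0 (b - c).
by move=> *; rewrite ler_norml; apply/andP; split; nra.
Qed.

End complex_parts.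

Section complex_integral.
Context {R : realType} {d : measure_display} {T : measurableType d}.
Variables (mu : {measure set T -> \bar R}) (D : set T).
Hypothesis mD : measurable D.
Implicit Types g h : T -> R[i].

Definition cintegrable h := mu.-integrable D (EFin \o (fun x => complex.Re (h x))) /\
  mu.-integrable D (EFin \o (fun x => complex.Im (h x))).

Definition cRintegral h : R[i] :=
  Complex (Rintegral mu D (fun x => complex.Re (h x)))
          (Rintegral mu D (fun x => complex.Im (h x))).

Definition csquare_integrable g :=
  measurable_fun D (fun x => complex.Re (g x)) /\
  measurable_fun D (fun x => complex.Im (g x)) /\
  (\int[mu]_(x in D) (normc2 (g x))%:E < +oo)%E.

Lemma csquare_integrable_normc2 g :
  csquare_integrable g -> mu.-integrable D (EFin \o (fun x => normc2 (g x))).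
Proof.
case=> mRe [mIm fin]; apply/integrableP; split.
  by apply/measurable_EFinP; apply: measurable_funD; exact: measurable_funX.
rewrite (eq_integral (fun x => (normc2 (g x))%:E)) // => x _.
by rewrite gee0_abs ?lee_fin ?normc2_ge0.
Qed.

Lemma cintegrable_conjM g h : csquare_integrable g -> csquare_integrable h ->
  cintegrable (fun x => conjc (g x) * h x).
Proof.
move=> g2 h2.
have gh_int := integrableD mD (csquare_integrable_normc2 _ g2)
  (csquare_integrable_normc2 _ h2).
case: g2 h2 => mRg [mIg _] [mRh [mIh _]]; split.
- apply: (le_integrable mD _ _ gh_int) => [|x _].
    apply/measurable_EFinP.
    under [fun x => _]funext do rewrite complex_Re_conjM.
    by apply: measurable_funD; exact: measurable_funM.
  by rewrite /= lee_fin (ger0_norm (addr_ge0 (normc2_ge0 _) (normc2_ge0 _)))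
    normr_Re_conjM_le.
- apply: (le_integrable mD _ _ gh_int) => [|x _].
    apply/measurable_EFinP.
    under [fun x => _]funext do rewrite complex_Im_conjM.
    by apply: measurable_funB; exact: measurable_funM.
  by rewrite /= lee_fin (ger0_norm (addr_ge0 (normc2_ge0 _) (normc2_ge0 _)))
    normr_Im_conjM_le.
Qed.

Lemma cintegrableD g h :
  cintegrable g -> cintegrable h -> cintegrable (fun x => g x + h x).
Proof.
move=> [gRe gIm] [hRe hIm]; split.
- under [fun x => _]funext do rewrite complex_ReD.
  exact: (integrableD mD gRe hRe).
- under [fun x => _]funext do rewrite complex_ImD.
  exact: (integrableD mD gIm hIm).
Qed.

Lemma cintegrableZl k h : cintegrable h -> cintegrable (fun x => k * h x).
Proof.
move=> [hRe hIm]; split.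
- under [fun x => _]funext do rewrite complex_ReM.
  exact: (integrableB mD (integrableZl mD _ hRe) (integrableZl mD _ hIm)).
- under [fun x => _]funext do rewrite complex_ImM.
  exact: (integrableD mD (integrableZl mD _ hIm) (integrableZl mD _ hRe)).
Qed.

Lemma cintegrable_sum (I : Type) (s : seq I) (h : I -> T -> R[i]) :
  (forall i, cintegrable (h i)) -> cintegrable (fun x => \sum_(i <- s) h i x).
Proof.
move=> h_int; elim: s => [|i s IHs].
  under [fun x => _]funext do rewrite big_nil.
  by split; exact: integrable0.
under [fun x => _]funext do rewrite big_cons.
exact: cintegrableD.
Qed.

Lemma cRintegralD g h : cintegrable g -> cintegrable h ->
  cRintegral (fun x => g x + h x) = cRintegral g + cRintegral h.
Proof.
move=> [gRe gIm] [hRe hIm]; rewrite /cRintegral.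
under [fun x => complex.Re _]funext do rewrite complex_ReD.
under [fun x => complex.Im _]funext do rewrite complex_ImD.
by rewrite !RintegralD.
Qed.

Lemma cRintegralB g h : cintegrable g -> cintegrable h ->
  cRintegral (fun x => g x - h x) = cRintegral g - cRintegral h.
Proof.
move=> [gRe gIm] [hRe hIm]; rewrite /cRintegral.
under [fun x => complex.Re _]funext do rewrite complex_ReB.
under [fun x => complex.Im _]funext do rewrite complex_ImB.
by rewrite !RintegralB.
Qed.

Lemma cRintegralZl k h : cintegrable h ->
  cRintegral (fun x => k * h x) = k * cRintegral h.
Proof.
move=> [hRe hIm]; rewrite /cRintegral.
under [fun x => complex.Re _]funext do rewrite complex_ReM.
under [fun x => complex.Im _]funext do rewrite complex_ImM.
rewrite RintegralB ?RintegralD ?RintegralZl //; first by case: k.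
all: exact: (integrableZl mD _ hRe) || exact: (integrableZl mD _ hIm).
Qed.

Lemma cRintegral_sum (I : Type) (s : seq I) (h : I -> T -> R[i]) :
  (forall i, cintegrable (h i)) ->
  cRintegral (fun x => \sum_(i <- s) h i x) = \sum_(i <- s) cRintegral (h i).
Proof.
move=> h_int; elim: s => [|i s IHs].
  under [fun x => _]funext do rewrite big_nil.
  by rewrite big_nil /cRintegral /Rintegral !integral0.
under [fun x => _]funext do rewrite big_cons.
by rewrite big_cons cRintegralD ?IHs //; exact: cintegrable_sum.
Qed.

End complex_integral.

Section finite_rank_operator.
Variables (R : realType) (A : set (R3 R)) (N : nat) (phi : 'I_N -> R3 R -> R[i]).
Hypotheses (mA : measurable A) (phi_L2 : forall n, L2 A (phi n)).

Local Notation mu3 :=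
  ((@lebesgue_measure R \x @lebesgue_measure R) \x @lebesgue_measure R)%E.

(* [leb3] integrates over the default sigma-algebra of [R3 R], whereas
   [lebesgue_measure] lives on [measurableTypeR R]: the two sigma-algebras agree,
   but integrals against them are not convertible, so [leb3] is handled as the
   pushforward of [mu3] along the identity. *)
Let mA3 :
  measurable (A : set ((measurableTypeR R * measurableTypeR R) * measurableTypeR R)).
Proof. exact: mA. Qed.

Lemma cintE h : cint A h = cRintegral mu3 A h.
Proof. by []. Qed.

Lemma leb3_ge0_integral (h : R3 R -> R) : measurable_fun A h -> (forall x, 0 <= h x) ->
  (\int[@leb3 R]_(x in A) (h x)%:E = \int[mu3]_(x in A) (h x)%:E)%E.
Proof.
move=> mh h_ge0.
have mid : measurable_fun setT (id : _ -> R3 R) by move=> _ Y mY; rewrite setTI.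
have -> : (\int[@leb3 R]_(x in A) (h x)%:E =
    \int[pushforward mu3 (id : _ -> R3 R)]_(x in A) (h x)%:E)%E by [].
rewrite ge0_integral_pushforward //.
- by apply/measurable_EFinP.
- by move=> x _; rewrite lee_fin.
Qed.

Lemma L2_csquare_integrable g : L2 A g -> csquare_integrable mu3 A g.
Proof.
case=> mRe [mIm fin]; split; [exact: mRe | split; [exact: mIm |]].
rewrite -leb3_ge0_integral //; last by move=> x; exact: normc2_ge0.
by apply: measurable_funD; exact: measurable_funX.
Qed.

Lemma cintegrable_conjM_phi j g : L2 A g ->
  cintegrable mu3 A (fun r => conjc (phi j r) * g r).
Proof.
by move=> g_L2; apply: cintegrable_conjM => //; exact: L2_csquare_integrable.
Qed.

Definition coef g : 'cV[R[i]]_N := \col_j cint A (fun r => conjc (phi j r) * g r).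

Lemma TopE M g r : Top A phi M g r = g r - \sum_i phi i r * (M *m coef g) i 0.
Proof.
congr (_ - _); apply: eq_bigr => i _; rewrite mxE mulr_sumr.
by apply: eq_bigr => j _; rewrite mxE mulrA.
Qed.

Lemma Top0 g : Top A phi 0 g =1 g.
Proof.
by move=> r; rewrite TopE mul0mx big1 ?subr0 // => i _; rewrite mxE mulr0.
Qed.

Lemma coef_Top M f : L2 A f ->
  coef (Top A phi M f) = coef f - Gram A phi *m (M *m coef f).
Proof.
move=> f_L2; apply/matrixP => j k; rewrite (ord1 k) !mxE.
have -> : (fun r => conjc (phi j r) * Top A phi M f r) = (fun r =>
    conjc (phi j r) * f r - \sum_i (M *m coef f) i 0 * (conjc (phi j r) * phi i r)).
  apply/funext => r; rewrite TopE mulrBr mulr_sumr; congr (_ - _).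
  by apply: eq_bigr => i _; rewrite [RHS]mulrC mulrA.
have phi_int i := cintegrable_conjM_phi j _ (phi_L2 i).
rewrite !cintE cRintegralB ?cRintegral_sum //.
- congr (_ - _); apply: eq_bigr => i _.
  by rewrite cRintegralZl // mulrC; congr (_ * _); rewrite mxE.
- by move=> i; exact: cintegrableZl.
- exact: cintegrable_conjM_phi.
- by apply: (cintegrable_sum _ _ mA3) => i; exact: cintegrableZl.
Qed.

Lemma Top_comp M1 M2 f : L2 A f ->
  Top A phi M1 (Top A phi M2 f) =1 Top A phi (M1 + M2 - M1 *m Gram A phi *m M2) f.
Proof.
move=> f_L2 r; rewrite !TopE coef_Top //.
have -> : (M1 + M2 - M1 *m Gram A phi *m M2) *m coef f =
    M2 *m coef f + M1 *m (coef f - Gram A phi *m (M2 *m coef f)).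
  by rewrite mulmxBr mulmxBl mulmxDl !mulmxA addrA [M2 *m _ + _]addrC.
rewrite -addrA -opprD -big_split /=; congr (_ - _); apply: eq_bigr => i _.
by rewrite -mulrDr [in RHS]mxE.
Qed.

End finite_rank_operator.

Section unitary_diagonalization.
Context {R : rcfType} {N : nat}.
Implicit Types (d e l : 'I_N -> R) (U : 'M[R[i]]_N).

Lemma diagCM d e : diagC d *m diagC e = diagC (fun n => d n * e n).
Proof.
by rewrite /diagC mulmx_diag; congr diag_mx; apply/rowP => n; rewrite !mxE rmorphM.
Qed.

Lemma diagCD d e : diagC d + diagC e = diagC (fun n => d n + e n).
Proof.
by rewrite /diagC -raddfD; congr diag_mx; apply/rowP => n; rewrite !mxE rmorphD.
Qed.

Lemma unitary_conj_diagCM U d e : adjmx U *m U = 1%:M ->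
  U *m diagC d *m adjmx U *m (U *m diagC e *m adjmx U) =
  U *m diagC (fun n => d n * e n) *m adjmx U.
Proof.
move=> U_unitary; rewrite -!mulmxA (mulmxA (adjmx U)) U_unitary mul1mx.
by rewrite (mulmxA (diagC d)) diagCM mulmxA.
Qed.

Lemma unitary_diagC_add_eq_mul U d l e : adjmx U *m U = 1%:M ->
  (forall n, d n + e n = d n * l n * e n) ->
  U *m diagC d *m adjmx U + U *m diagC e *m adjmx U =
  U *m diagC d *m adjmx U *m (U *m diagC l *m adjmx U) *m (U *m diagC e *m adjmx U).
Proof.
move=> U_unitary de_eq; rewrite !unitary_conj_diagCM // -mulmxDl -mulmxDr diagCD.
by congr (_ *m diagC _ *m _); apply/funext.
Qed.

End unitary_diagonalization.

Lemma Bbar_B_coef_add_eq_mul (F : fieldType) (l s : F) : l != 0 -> s != 0 ->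
  (1 + s) / (l * s) + (1 + s) / l = (1 + s) / (l * s) * l * ((1 + s) / l).
Proof. by move=> l_neq0 s_neq0; field; rewrite l_neq0 s_neq0. Qed.

Theorem lemma7 (R : realType) (N : nat) (A : set (R3 R))
  (phi : 'I_N -> R3 R -> R[i]) (U : 'M[R[i]]_N) (lam : 'I_N -> R) :
  measurable A ->
  (forall n, L2 A (phi n)) ->
  (forall i j, i != j -> ~ parallel A (phi i) (phi j)) ->
  posdef (Gram A phi) ->
  adjmx U *m U = 1%:M ->
  Gram A phi = U *m diagC lam *m adjmx U ->
  (forall n, 0 < lam n) ->
  forall f : R3 R -> R[i], L2 A f ->
    (forall r, A r -> Top A phi (Bbar_mx U lam) (Top A phi (B_mx U lam) f) r = f r) /\
    (forall r, A r -> Top A phi (B_mx U lam) (Top A phi (Bbar_mx U lam) f) r = f r).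
Proof.
move=> mA phi_L2 _ _ U_unitary Gram_eig lam_gt0 f f_L2.
have coef_eq n : let s := Num.sqrt (1 + lam n) in
    (1 + s) / (lam n * s) + (1 + s) / lam n =
    (1 + s) / (lam n * s) * lam n * ((1 + s) / lam n).
  by apply: Bbar_B_coef_add_eq_mul; rewrite gt_eqF ?sqrtr_gt0 ?addr_gt0.
have Bbar_B : Bbar_mx U lam + B_mx U lam = Bbar_mx U lam *m Gram A phi *m B_mx U lam.
  by rewrite Gram_eig; apply: unitary_diagC_add_eq_mul => // n; exact: coef_eq.
have B_Bbar : B_mx U lam + Bbar_mx U lam = B_mx U lam *m Gram A phi *m Bbar_mx U lam.
  rewrite Gram_eig; apply: unitary_diagC_add_eq_mul => // n.
  by rewrite addrC coef_eq /=; ring.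
by split=> r _; rewrite Top_comp // ?Bbar_B ?B_Bbar subrr Top0.
Qed.
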